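(* (Intuitionistic logic.) If every subset of $\mathbb{N}$ is countable and Markov's principle holds, then the law of excluded middle holds.
   Context: A set $X$ is countable if there is a surjection $\mathbb{N} \to X+1$. Markov's principle: for every $f : \mathbb{N} \to \{0,1\}$, $\neg\neg(\exists n \in \mathbb{N}.\, f(n)=1)$ implies $\exists n\in\mathbb{N}.\, f(n) = 1$. The setting is intuitionistic higher-order logic (e.g. the internal language of a topos), where ''every subset of $\mathbb{N}$'' quantifies over the power object of $\mathbb{N}$. *)

(* Subsets of N are predicates nat -> Prop
   (the power object of N), and a subset A is viewed as the type {n | A n}. *)

Definition countable (X : Type) : Prop :=
  exists f : nat -> X + unit, forall y : X + unit, exists n : nat, f n = y.

Definition subset_type (A : nat -> Prop) : Type := { n : nat | A n }.

Definition markov_principle : Prop :=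
  forall f : nat -> bool,
    ~ ~ (exists n : nat, f n = true) -> exists n : nat, f n = true.

Definition LEM : Prop := forall P : Prop, P \/ ~ P.


(* A surjection [f : nat -> X + 1] makes inhabitation of [X] semidecidable:
   [X] is inhabited iff [f n] lies in the left summand for some [n].  Markov's
   principle thus makes it ¬¬-stable.  Every proposition [P] is the
   inhabitation of the subset [{n | P}] of [nat], which is countable by
   hypothesis, so ¬¬P -> P holds for all [P], and this is excluded middle. *)

Definition is_inl {X Y : Type} (s : X + Y) : bool :=
  match s with inl _ => true | inr _ => false end.

Lemma countable_inhabited_semidecidable (X : Type) :
  countable X -> exists f : nat -> bool, inhabited X <-> exists n, f n = true.
Proof.
  intros [f f_surj]. exists (fun n => is_inl (f n)). split.
  - intros [x]. destruct (f_surj (inl x)) as [n fn_x].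
    exists n. rewrite fn_x. reflexivity.
  - intros [n fn_inl]. destruct (f n) as [x|]; [exact (inhabits x) | discriminate].
Qed.

Lemma markov_countable_inhabited_stable (X : Type) :
  markov_principle -> countable X -> ~ ~ inhabited X -> inhabited X.
Proof.
  intros markov X_countable nn_inhabited.
  destruct (countable_inhabited_semidecidable X X_countable) as [f f_spec].
  apply f_spec, markov. intros no_witness.
  apply nn_inhabited. intros inhabited_X. apply no_witness, f_spec, inhabited_X.
Qed.

Lemma inhabited_subset_type_const (P : Prop) :
  inhabited (subset_type (fun _ => P)) <-> P.
Proof.
  split.
  - intros [[_ p]]. exact p.
  - intros p. exact (inhabits (exist _ 0 p)).
Qed.

Lemma LEM_of_double_negation_elimination :
  (forall P : Prop, ~ ~ P -> P) -> LEM.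
Proof.
  intros dne P. apply dne. intros not_em.
  apply not_em. right. intros p. apply not_em. left. exact p.
Qed.

Theorem proposition2p6 :
  (forall A : nat -> Prop, countable (subset_type A)) ->
  markov_principle ->
  LEM.
Proof.
  intros subsets_countable markov.
  apply LEM_of_double_negation_elimination. intros P nnP.
  apply inhabited_subset_type_const.
  apply markov_countable_inhabited_stable;
    [exact markov | apply subsets_countable |].
  intros not_inhabited. apply nnP. intros p.
  apply not_inhabited, inhabited_subset_type_const, p.
Qed.
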